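(* Let $L$ be a Lie algebra over a field $K$ of characteristic $\neq 2$ such that $\mathrm{HomLie}(L)$ is closed with respect to the anticommutator $\varphi * \psi = \frac12(\varphi\circ\psi+\psi\circ\varphi)$, and regard $\mathrm{HomLie}(L)$ as a Jordan algebra with this product. Then: (i) $L$ is homomorphically mapped to the Lie algebra $\mathrm{Der}(\mathrm{HomLie}(L))$ of derivations of this Jordan algebra; (ii) the automorphism group $\mathrm{Aut}(L)$ is homomorphically mapped to the automorphism group $\mathrm{Aut}(\mathrm{HomLie}(L))$ of this Jordan algebra.
   Context: A Hom-Lie structure on a Lie algebra $L$ is a linear map $\varphi: L \to L$ satisfying $[[x,y],\varphi(z)] + [[z,x],\varphi(y)] + [[y,z],\varphi(x)] = 0$ for all $x,y,z \in L$. $\mathrm{HomLie}(L)$ is the vector space of all Hom-Lie structures on $L$. *)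

From HB Require Import structures.
From mathcomp Require Import all_boot all_algebra.
Set Implicit Arguments. Unset Strict Implicit. Unset Printing Implicit Defensive.
Import GRing.Theory.
Local Open Scope ring_scope.

Section Defs.
Variables (K : fieldType) (V : lmodType K).

Definition is_lin (f : V -> V) : Prop :=
  forall (a : K) (x y : V), f (a *: x + y) = a *: f x + f y.

Definition lie_bracket (br : V -> V -> V) : Prop :=
  [/\ forall z, is_lin (fun x => br x z),
      forall x, is_lin (br x),
      forall x, br x x = 0
    & forall x y z, br x (br y z) + br y (br z x) + br z (br x y) = 0].

Definition hom_lie (br : V -> V -> V) (phi : V -> V) : Prop :=
  is_lin phi /\
  forall x y z, br (br x y) (phi z) + br (br z x) (phi y) + br (br y z) (phi x) = 0.

Definition jprod (phi psi : V -> V) : V -> V :=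
  fun v => 2^-1 *: (phi (psi v) + psi (phi v)).

Definition homlie_jordan_closed (br : V -> V -> V) : Prop :=
  forall phi psi, hom_lie br phi -> hom_lie br psi -> hom_lie br (jprod phi psi).

(* d is a derivation of the Jordan algebra HomLie(L)
   (maps HomLie(L) to itself, linear, Leibniz rule for jprod);
   equality of maps is pointwise *)
Definition jordan_der (br : V -> V -> V) (d : (V -> V) -> (V -> V)) : Prop :=
  [/\ forall phi, hom_lie br phi -> hom_lie br (d phi),
      forall (a : K) phi psi, hom_lie br phi -> hom_lie br psi ->
        forall v, d (fun w => a *: phi w + psi w) v = a *: d phi v + d psi v
    & forall phi psi, hom_lie br phi -> hom_lie br psi ->
        forall v, d (jprod phi psi) v = jprod (d phi) psi v + jprod phi (d psi) v].

Definition jordan_aut (br : V -> V -> V) (g gi : (V -> V) -> (V -> V)) : Prop :=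
  [/\ forall phi, hom_lie br phi -> hom_lie br (g phi) /\ hom_lie br (gi phi),
      forall phi, hom_lie br phi -> forall v, gi (g phi) v = phi v,
      forall phi, hom_lie br phi -> forall v, g (gi phi) v = phi v,
      forall (a : K) phi psi, hom_lie br phi -> hom_lie br psi ->
        forall v, g (fun w => a *: phi w + psi w) v = a *: g phi v + g psi v
    & forall phi psi, hom_lie br phi -> hom_lie br psi ->
        forall v, g (jprod phi psi) v = jprod (g phi) (g psi) v].

Definition lie_aut (br : V -> V -> V) (sigma sigmai : V -> V) : Prop :=
  [/\ is_lin sigma, cancel sigma sigmai, cancel sigmai sigma
    & forall x y, sigma (br x y) = br (sigma x) (sigma y)].

(* the map L -> Der(HomLie(L)) : x |-> (phi |-> [ad x, phi]) *)
Definition ad_der (br : V -> V -> V) (x : V) : (V -> V) -> (V -> V) :=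
  fun phi v => br x (phi v) - phi (br x v).

Definition conj_aut (sigma sigmai : V -> V) : (V -> V) -> (V -> V) :=
  fun phi v => sigma (phi (sigmai v)).

End Defs.

From HB Require Import structures.
From mathcomp Require Import all_boot all_algebra.
Import GRing.Theory.
Local Open Scope ring_scope.
Set Implicit Arguments. Unset Strict Implicit.

(* ad x is a derivation of L, and the commutator [D, phi] of a derivation D with
   a Hom-Lie structure phi is again Hom-Lie.  Commutation with a fixed linear map
   is a derivation of the composition of maps, hence of the anticommutator, and
   ad [x, y] = [ad x, ad y] gives the bracket compatibility.  Likewise,
   conjugation by a Lie automorphism transports the Hom-Lie identity and
   respects composition. *)

Section LinearMaps.
Variables (K : fieldType) (V : lmodType K).

Section IsLin.
Variables (f : V -> V) (f_lin : is_lin f).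

Lemma is_linD x y : f (x + y) = f x + f y.
Proof. by have := f_lin 1 x y; rewrite !scale1r. Qed.

Lemma is_lin0 : f 0 = 0.
Proof. by apply: (@addrI _ (f 0)); rewrite -is_linD !addr0. Qed.

Lemma is_linZ a x : f (a *: x) = a *: f x.
Proof. by have := f_lin a x 0; rewrite !addr0 is_lin0 addr0. Qed.

Lemma is_linN x : f (- x) = - f x.
Proof. by rewrite -scaleN1r is_linZ scaleN1r. Qed.

Lemma is_linB x y : f (x - y) = f x - f y.
Proof. by rewrite is_linD is_linN. Qed.

End IsLin.

Definition map_comm (D phi : V -> V) : V -> V := fun v => D (phi v) - phi (D v).

Lemma is_lin_map_comm D phi : is_lin D -> is_lin phi -> is_lin (map_comm D phi).
Proof.
move=> D_lin phi_lin a x y; rewrite /map_comm phi_lin D_lin.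
by rewrite (is_linD D_lin) (is_linZ D_lin) (is_linD phi_lin) (is_linZ phi_lin)
  opprD addrACA -scalerBr.
Qed.

Lemma map_commD D (a : K) phi psi v : is_lin D ->
  map_comm D (fun w => a *: phi w + psi w) v = a *: map_comm D phi v + map_comm D psi v.
Proof. by move=> D_lin; rewrite /map_comm D_lin opprD addrACA -scalerBr. Qed.

Lemma map_comm_comp D phi psi v : is_lin phi ->
  map_comm D (phi \o psi) v = map_comm D phi (psi v) + phi (map_comm D psi v).
Proof. by move=> phi_lin; rewrite /map_comm /= (is_linB phi_lin) addrA subrK. Qed.

Lemma map_comm_jprod D phi psi v : is_lin D -> is_lin phi -> is_lin psi ->
  map_comm D (jprod phi psi) v =
    jprod (map_comm D phi) psi v + jprod phi (map_comm D psi) v.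
Proof.
move=> D_lin phi_lin psi_lin.
have -> : map_comm D (jprod phi psi) v =
    2^-1 *: (map_comm D (phi \o psi) v + map_comm D (psi \o phi) v).
  by rewrite /map_comm /jprod (is_linZ D_lin) (is_linD D_lin) -scalerBr opprD addrACA.
rewrite /jprod (map_comm_comp _ _ _ phi_lin) (map_comm_comp _ _ _ psi_lin) -scalerDr.
congr (_ *: _).
by rewrite [RHS]addrACA (addrC (psi _)).
Qed.

Lemma map_comm_jacobi A B phi v : is_lin A -> is_lin B -> is_lin phi ->
  map_comm (map_comm A B) phi v =
    map_comm A (map_comm B phi) v - map_comm B (map_comm A phi) v.
Proof.
move=> A_lin B_lin phi_lin.
rewrite /map_comm (is_linB phi_lin) (is_linB A_lin) (is_linB B_lin) !opprB !addrA.
by rewrite [RHS](ACl ((1*8*3*6)*((2*5)*(4*7)))%AC) /= !addNr !addr0.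
Qed.

End LinearMaps.

Section LieAlgebra.
Variables (K : fieldType) (V : lmodType K) (br : V -> V -> V).

Definition lie_der (D : V -> V) : Prop :=
  is_lin D /\ forall a b, D (br a b) = br (D a) b + br a (D b).

Hypothesis br_lie : lie_bracket br.

Lemma lie_bracket_linl z : is_lin (br^~ z). Proof. by case: br_lie. Qed.

Lemma lie_bracket_linr x : is_lin (br x). Proof. by case: br_lie. Qed.

Lemma lie_bracket_anti x y : br x y = - br y x.
Proof.
case: br_lie => _ _ br_alt _; apply/eqP; rewrite -addr_eq0.
have := br_alt (x + y).
rewrite (is_linD (lie_bracket_linl _)) !(is_linD (lie_bracket_linr _)).
by rewrite !br_alt add0r addr0 => /eqP.
Qed.

Lemma lie_bracket_ad x y w : br (br x y) w = map_comm (br x) (br y) w.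
Proof.
case: br_lie => _ _ _ br_jacobi; apply/eqP.
rewrite /map_comm (lie_bracket_anti (br x y)) eq_sym -addr_eq0.
by rewrite (lie_bracket_anti x w) (is_linN (lie_bracket_linr _)) opprK br_jacobi.
Qed.

Lemma lie_der_ad u : lie_der (br u).
Proof.
split=> [|a b]; first exact: lie_bracket_linr.
by rewrite lie_bracket_ad /map_comm subrK.
Qed.

Lemma hom_lie_map_comm D phi :
  lie_der D -> hom_lie br phi -> hom_lie br (map_comm D phi).
Proof.
move=> [D_lin D_der] [phi_lin phi_hl]; split; first exact: is_lin_map_comm.
move=> x y z.
(* Applying D to the Hom-Lie identity at (x, y, z) and expanding by the Leibniz
   rule yields the identity for [D, phi] plus those at (D x, y, z), (x, D y, z)
   and (x, y, D z). *)
pose S x y z := br (br x y) (phi z) + br (br z x) (phi y) + br (br y z) (phi x).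
have expand : br (br x y) (map_comm D phi z) + br (br z x) (map_comm D phi y) +
    br (br y z) (map_comm D phi x) + (S (D x) y z + S x (D y) z + S x y (D z)) =
    D (S x y z).
  rewrite /S /map_comm !(is_linD D_lin) !D_der !(is_linB (lie_bracket_linr _)).
  rewrite !(is_linD (lie_bracket_linl _)).
  rewrite !addrA [LHS](ACl ((7*10*1*14*8*3*12*15*5) * ((2*13)*(4*11)*(6*9)))%AC).
  by rewrite /= !addNr !addr0.
apply: (addIr (S (D x) y z + S x (D y) z + S x y (D z))).
by rewrite expand /S !phi_hl (is_lin0 D_lin) !addr0.
Qed.

Lemma ad_derE x : ad_der br x = map_comm (br x).
Proof. by []. Qed.

Lemma ad_der_jordan_der u : jordan_der br (ad_der br u).
Proof.
have [u_lin _] := lie_der_ad u.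
rewrite ad_derE; split=> [phi|a phi psi _ _ v|phi psi [phi_lin _] [psi_lin _] v].
- exact: hom_lie_map_comm (lie_der_ad u).
- exact: map_commD.
- exact: map_comm_jprod.
Qed.

Lemma ad_der_linear (a : K) x y phi : hom_lie br phi -> forall v,
  ad_der br (a *: x + y) phi v = a *: ad_der br x phi v + ad_der br y phi v.
Proof.
move=> [phi_lin _] v; rewrite /ad_der (lie_bracket_linl (phi v)) (lie_bracket_linl v).
by rewrite (is_linD phi_lin) (is_linZ phi_lin) opprD addrACA -scalerBr.
Qed.

Lemma ad_der_bracket x y phi : hom_lie br phi -> forall v,
  ad_der br (br x y) phi v =
    ad_der br x (ad_der br y phi) v - ad_der br y (ad_der br x phi) v.
Proof.
move=> [phi_lin _] v; rewrite /ad_der !lie_bracket_ad.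
by apply: map_comm_jacobi => //; apply: lie_bracket_linr.
Qed.

Section Automorphism.
Variables sigma sigmai : V -> V.
Hypothesis sigma_aut : lie_aut br sigma sigmai.

Lemma lie_autV : lie_aut br sigmai sigma.
Proof.
have [sigma_lin sigmaK sigmaiK sigma_br] := sigma_aut.
split=> // [a x y | x y]; apply: (can_inj sigmaK).
  by rewrite sigma_lin !sigmaiK.
by rewrite sigma_br !sigmaiK.
Qed.

Lemma hom_lie_conj phi : hom_lie br phi -> hom_lie br (conj_aut sigma sigmai phi).
Proof.
have [sigma_lin _ sigmaiK sigma_br] := sigma_aut.
have [sigmai_lin _ _ _] := lie_autV.
move=> [phi_lin phi_hl]; split=> [a x y | x y z].
  by rewrite /conj_aut sigmai_lin phi_lin sigma_lin.
have := congr1 sigma (phi_hl (sigmai x) (sigmai y) (sigmai z)).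
by rewrite !(is_linD sigma_lin) (is_lin0 sigma_lin) !sigma_br !sigmaiK.
Qed.

End Automorphism.

Lemma conj_jordan_aut sigma sigmai : lie_aut br sigma sigmai ->
  jordan_aut br (conj_aut sigma sigmai) (conj_aut sigmai sigma).
Proof.
move=> sigma_aut; have [sigma_lin sigmaK sigmaiK _] := sigma_aut.
split=> [phi phi_hl | phi _ v | phi _ v | a phi psi _ _ v | phi psi _ _ v].
- by split; apply: hom_lie_conj => //; apply: lie_autV.
- by rewrite /conj_aut !sigmaK.
- by rewrite /conj_aut !sigmaiK.
- by rewrite /conj_aut sigma_lin.
- by rewrite /conj_aut /jprod (is_linZ sigma_lin) (is_linD sigma_lin) !sigmaK.
Qed.

End LieAlgebra.

Theorem proposition2p6 (K : fieldType) (V : lmodType K) (br : V -> V -> V) :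
  (2%:R : K) != 0 ->
  lie_bracket br ->
  homlie_jordan_closed br ->
  (* (i) x |-> [ad x, -] is a Lie algebra homomorphism L -> Der(HomLie(L)) *)
  ((forall x, jordan_der br (ad_der br x)) /\
   (forall (a : K) x y phi, hom_lie br phi -> forall v,
      ad_der br (a *: x + y) phi v = a *: ad_der br x phi v + ad_der br y phi v) /\
   (forall x y phi, hom_lie br phi -> forall v,
      ad_der br (br x y) phi v =
        ad_der br x (ad_der br y phi) v - ad_der br y (ad_der br x phi) v)) /\
  (* (ii) sigma |-> sigma o - o sigma^-1 is a group homomorphism
          Aut(L) -> Aut(HomLie(L)) *)
  ((forall sigma sigmai, lie_aut br sigma sigmai ->
      jordan_aut br (conj_aut sigma sigmai) (conj_aut sigmai sigma)) /\
   (forall sigma sigmai tau taui,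
      lie_aut br sigma sigmai -> lie_aut br tau taui ->
      forall phi, hom_lie br phi -> forall v,
        conj_aut (sigma \o tau) (taui \o sigmai) phi v =
          conj_aut sigma sigmai (conj_aut tau taui phi) v)).
Proof.
(* Closedness of HomLie(L) under the anticommutator (and char <> 2) only make
   HomLie(L) a Jordan algebra; the Leibniz and automorphism identities hold
   for the anticommutator regardless. *)
move=> _ br_lie _.
split; first split; [exact: ad_der_jordan_der | split|].
- exact: ad_der_linear.
- exact: ad_der_bracket.
- by split; first exact: conj_jordan_aut.
Qed.
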